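(* Let $n\ge 3$ be odd and let $C$ be a Greene–Kleitman chain in $Q_{n-2}$ with $|C|=1$. Put $L:=\ell( *C* )$ and $F:=f( *C* )$ (chains in $Q_n$). Then the bottom end of $L$ is adjacent in $Q_n$ to the top end of $F$, and the chains $*L*$ and $f( *F* )$ are connected at their bottom ends in $Q_{n+2}$. Specifically, if $C=u*v$ with $u,v\in D$, then $L=*\,u\,0\,v\,1$, $*L*=*\,*\,u\,0\,v\,1\,*$, $F=0\,u\,1\,v\,*$, and $f( *F* )=0\,0\,u\,1\,v\,1\,*$; i.e., $L$ and $F$ differ in exactly three positions, and $*L*$ and $f( *F* )$ differ in exactly three positions.
   Context: $Q_n$ is the hypercube on $\{0,1\}^n$. Let $D$ be the set of bitstrings (including the empty string) with equally many $0$s and $1$s such that every prefix has at least as many $0$s as $1$s. A Greene–Kleitman chain in $Q_n$ is a string of length $n$ over $\{0,1,*\}$ of the form $u_0*u_1*\cdots*u_{h-1}*u_h$ with all $u_j\in D$, representing the path whose vertices are obtained by replacing the $*$s by $i$ ones followed by $h-i$ zeros; $|C|=h$ is its number of $*$s. Its bottom end is obtained by replacing all $*$s by $0$, its top end by replacing all $*$s by $1$. For a string $C$ over $\{0,1,*\}$ with at least two $*$s, $f(C)$ (resp. $\ell(C)$) is obtained by replacing the first two (resp. last two) $*$s by $0$ and $1$, respectively. Juxtaposition denotes concatenation. Two chains are connected at their bottom ends if their bottom ends differ in exactly one position. *)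

From mathcomp Require Import all_boot.
Set Implicit Arguments. Unset Strict Implicit. Unset Printing Implicit Defensive.

Definition sym := option bool.
Definition s0 : sym := Some false.
Definition s1 : sym := Some true.
Definition Star : sym := None.

Definition bitstr (u : seq sym) : bool := all (fun x => x != Star) u.

Definition inD (u : seq sym) : bool :=
  [&& bitstr u, count_mem s0 u == count_mem s1 u &
      all (fun i => count_mem s1 (take i u) <= count_mem s0 (take i u))
          (iota 0 (size u).+1)].

Fixpoint glue (us : seq (seq sym)) : seq sym :=
  match us with
  | [::] => [::]
  | [:: u] => u
  | u :: us' => u ++ Star :: glue us'
  end.

Definition GK_chain (n : nat) (C : seq sym) : Prop :=
  size C = n /\ exists us : seq (seq sym), us != [::] /\ all inD us /\ C = glue us.

Definition nstars (C : seq sym) : nat := count_mem Star C.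

Definition bottom (C : seq sym) : seq sym := map (fun x => if x is None then s0 else x) C.
Definition top (C : seq sym) : seq sym := map (fun x => if x is None then s1 else x) C.

Fixpoint repl_first (b : bool) (s : seq sym) : seq sym :=
  match s with
  | [::] => [::]
  | x :: s' => if x == Star then Some b :: s' else x :: repl_first b s'
  end.

Definition fC (C : seq sym) : seq sym := repl_first true (repl_first false C).
(* l(C): last two stars replaced by 0 and 1 respectively *)
Definition lC (C : seq sym) : seq sym := rev (repl_first false (repl_first true (rev C))).

Definition differ_in (k : nat) (s t : seq sym) : Prop :=
  size s = size t /\ count (fun p => p.1 != p.2) (zip s t) = k.

Definition adjacent (x y : seq sym) : Prop := bitstr x /\ bitstr y /\ differ_in 1 x y.

Definition connected_bottom (A B : seq sym) : Prop := differ_in 1 (bottom A) (bottom B).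

From mathcomp Require Import all_boot.

Set Implicit Arguments.
Unset Strict Implicit.
Unset Printing Implicit Defensive.

(* Once [C] is split as [u * v] at that
   star, every string in the statement is [u] and [v] framed by a few explicit
   symbols, read off from which stars [f] and [l] replace; the required distances
   are then counted position by position. *)

Lemma bitstrE s : bitstr s = (Star \notin s).
Proof. by rewrite -has_pred1 -all_predC. Qed.

Lemma bitstr_rev s : bitstr (rev s) = bitstr s.
Proof. exact: all_rev. Qed.

Lemma bitstr_cat s t : bitstr (s ++ t) = bitstr s && bitstr t.
Proof. exact: all_cat. Qed.

Lemma bitstr_bottom s : bitstr (bottom s).
Proof. by rewrite /bitstr all_map; apply/allP => -[]. Qed.

Lemma bitstr_top s : bitstr (top s).
Proof. by rewrite /bitstr all_map; apply/allP => -[]. Qed.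

Lemma inD_bitstr u : inD u -> bitstr u.
Proof. by case/and3P. Qed.

Lemma nstars1_split C : nstars C = 1 ->
  exists u v, [/\ bitstr u, bitstr v & C = u ++ Star :: v].
Proof.
elim: C => [|[b|] C IH] //; rewrite /nstars /=.
- by case/IH=> u [v [bu bv ->]]; exists (Some b :: u), v.
- by rewrite add1n => -[/count_memPn C0]; exists [::], C; split; rewrite ?bitstrE.
Qed.

Lemma cat_star_inj u v u' v' : bitstr u -> bitstr u' ->
  u ++ Star :: v = u' ++ Star :: v' -> u = u' /\ v = v'.
Proof.
elim: u u' => [|x u IH] [|x' u'] /=.
- by move=> _ _ [->].
- by case: x' => [b _ _ []|].
- by case: x => [b _ _ []|].
by move=> /andP[_ bu] /andP[_ bu'] [-> /(IH _ bu bu')] [-> ->].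
Qed.

Lemma repl_first_cat b u s : bitstr u ->
  repl_first b (u ++ s) = u ++ repl_first b s.
Proof. by elim: u => [|[c|] u IH] //= /IH ->. Qed.

Lemma fC_cat u v w : bitstr u -> bitstr v ->
  fC (u ++ Star :: v ++ Star :: w) = u ++ s0 :: v ++ s1 :: w.
Proof. by move=> bu bv; rewrite /fC !repl_first_cat //= repl_first_cat. Qed.

Lemma lC_cat u v w : bitstr v -> bitstr w ->
  lC (u ++ Star :: v ++ Star :: w) = u ++ s0 :: v ++ s1 :: w.
Proof.
move=> bv bw; rewrite /lC !rev_pivot -catA /=.
do 3 rewrite repl_first_cat ?bitstr_rev //=.
by rewrite !rev_pivot !revK -catA.
Qed.

Lemma bottom_cat s t : bottom (s ++ t) = bottom s ++ bottom t.
Proof. exact: map_cat. Qed.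

Lemma top_cat s t : top (s ++ t) = top s ++ top t.
Proof. exact: map_cat. Qed.

Lemma bottom_cons x s : bottom (x :: s) = (if x is None then s0 else x) :: bottom s.
Proof. by []. Qed.

Lemma top_cons x s : top (x :: s) = (if x is None then s1 else x) :: top s.
Proof. by []. Qed.

Lemma bottom_bitstr s : bitstr s -> bottom s = s.
Proof. by move=> bs; apply/map_id_in => -[] // /(allP bs). Qed.

Lemma top_bitstr s : bitstr s -> top s = s.
Proof. by move=> bs; apply/map_id_in => -[] // /(allP bs). Qed.

Lemma differ_in_nil : differ_in 0 [::] [::].
Proof. by []. Qed.

Lemma differ_in_cons_eq k x s t : differ_in k s t -> differ_in k (x :: s) (x :: t).
Proof. by case=> st kst; split; rewrite /= ?st ?eqxx. Qed.

Lemma differ_in_cons_neq k x y s t : x != y ->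
  differ_in k s t -> differ_in k.+1 (x :: s) (y :: t).
Proof. by move=> xy [st kst]; split; rewrite /= ?st ?xy ?kst. Qed.

Lemma differ_in_catl k u s t : differ_in k s t -> differ_in k (u ++ s) (u ++ t).
Proof. by elim: u => //= x u IH /IH; apply: differ_in_cons_eq. Qed.

Section OneStarChain.

Variables u v : seq sym.
Hypotheses (bu : bitstr u) (bv : bitstr v).

Lemma lC_star_wrap :
  lC (Star :: rcons (u ++ Star :: v) Star) = Star :: u ++ s0 :: v ++ [:: s1].
Proof. by rewrite -cats1 -catA (lC_cat (Star :: u)). Qed.

Lemma fC_star_wrap :
  fC (Star :: rcons (u ++ Star :: v) Star) = s0 :: u ++ s1 :: v ++ [:: Star].
Proof. by rewrite -cats1 -catA (fC_cat (u := [::])). Qed.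

Lemma fC_star_wrap_fC_star_wrap :
  fC (Star :: rcons (s0 :: u ++ s1 :: v ++ [:: Star]) Star) =
  [:: s0, s0 & u] ++ s1 :: v ++ [:: s1; Star].
Proof.
have -> : Star :: rcons (s0 :: u ++ s1 :: v ++ [:: Star]) Star =
          [::] ++ Star :: (s0 :: u ++ s1 :: v) ++ [:: Star; Star].
  by rewrite /= rcons_cat /= rcons_cat -catA.
by rewrite (fC_cat (u := [::])) //= -?catA // bitstr_cat bu /= bv.
Qed.

End OneStarChain.

Ltac count_differences :=
  repeat first [ exact: differ_in_nil
               | apply: differ_in_catl
               | apply: differ_in_cons_eq
               | apply: differ_in_cons_neq; first done ].

Theorem lemma22 (n : nat) (C : seq sym) :
  3 <= n -> odd n -> GK_chain (n - 2) C -> nstars C = 1 ->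
  let L := lC (Star :: rcons C Star) in
  let F := fC (Star :: rcons C Star) in
  [/\ adjacent (bottom L) (top F),
      connected_bottom (Star :: rcons L Star) (fC (Star :: rcons F Star)),
      differ_in 3 L F,
      differ_in 3 (Star :: rcons L Star) (fC (Star :: rcons F Star)) &
      forall u v : seq sym, inD u -> inD v -> C = u ++ Star :: v ->
        [/\ L = Star :: u ++ s0 :: v ++ [:: s1],
            Star :: rcons L Star = [:: Star, Star & u] ++ s0 :: v ++ [:: s1; Star],
            F = s0 :: u ++ s1 :: v ++ [:: Star] &
            fC (Star :: rcons F Star) = [:: s0, s0 & u] ++ s1 :: v ++ [:: s1; Star]]].
Proof.
move=> _ _ _ /nstars1_split [u [v [bu bv ->]]] L F.
rewrite {}/L {}/F (lC_star_wrap u bv) (fC_star_wrap v bu).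
rewrite (fC_star_wrap_fC_star_wrap bu bv) !(rcons_cons, rcons_cat).
split=> //.
- split; first exact: bitstr_bottom; split; first exact: bitstr_top.
  rewrite !(bottom_cons, bottom_cat, top_cons, top_cat).
  rewrite (bottom_bitstr bu) (bottom_bitstr bv) (top_bitstr bu) (top_bitstr bv).
  count_differences.
- rewrite /connected_bottom !(bottom_cons, bottom_cat).
  rewrite (bottom_bitstr bu) (bottom_bitstr bv).
  count_differences.
- count_differences.
- count_differences.
by move=> u' v' /inD_bitstr bu' _ /(cat_star_inj bu bu') [<- <-].
Qed.
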